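(* Let $(\theta, \tau) \in \mathbb{T} \times \mathbb{R}$, and define the maps $R_{\theta, \tau}(x, \omega) := (x + \theta, \omega + \tau)$ on $\mathbb{T}\times\mathbb{R}$ and $t_\tau(\omega) := \omega + \tau$ on $\mathbb{R}$ (addition on the torus is mod $2\pi$). Let $(\mu_t)_{t\ge 0}$ be a solution of the MFG problem with intrinsic frequency distribution $g$, and set $\tilde{\mu}_t := (R_{\theta + \tau t, \tau})_{\#} \mu_t$ and $\tilde{g} := (t_\tau)_{\#} g$ (push-forward measures). Then $(\tilde{\mu}_t)_{t \ge 0}$ is a solution of the MFG problem with intrinsic frequency distribution $\tilde{g}$.
   Context: $\mathbb{T} = \mathbb{R}/(2\pi\mathbb{Z})$. $g \in \mathcal{P}(\mathbb{R})$ has finite first moment. For $x\in\mathbb{T}$ and $\mu\in\mathcal{P}(\mathbb{T}\times\mathbb{R})$, $c(x,\mu) := \int 2\sin^2(\frac{x-y}{2})\,\mu(\mathrm{d}y,\mathrm{d}\omega)$. On a filtered probability space with Brownian motion $B$, $\mathcal{A}$ denotes square-integrable progressively measurable real controls. Given a flow $(\mu_t)$ in $\mathcal{P}(\mathbb{T}\times\mathbb{R})$ with second marginal $g$, disintegrated as $\mu_t(\mathrm{d}x,\mathrm{d}\omega)=\mu_t^\omega(\mathrm{d}x)g(\mathrm{d}\omega)$, the cost for frequency $\omega$ is $J^{\omega,\mu}(\alpha) = \mathbb{E}\int_0^\infty e^{-\beta t}[\frac12\alpha_t^2 + \kappa c(X_t^{\omega,\alpha},\mu_t)]\mathrm{d}t$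 with $X^{\omega,\alpha}_t = X_0^\omega + \int_0^t\alpha_s\mathrm{d}s + \omega t + \sigma B_t$, $\mathcal{L}(X_0^\omega)=\mu_0^\omega$, $\kappa\ge0$, $\beta,\sigma>0$. $(\mu_t)$ is a solution of the MFG problem with intrinsic frequency distribution $g$ if: for all $t$ the second marginal of $\mu_t$ is $g$; and there is a Borel set $E$ with $g(E)=1$ such that for all $\omega\in E$ the disintegration holds and there exists $\alpha^\omega_*\in\mathcal{A}$ with $\inf_{\alpha\in\mathcal{A}} J^{\omega,\mu}(\alpha) = J^{\omega,\mu}(\alpha^\omega_* )$ and $\mathcal{L}(X_t^{\omega,\alpha^\omega_*}) = \mu_t^\omega$ for all $t\ge0$. *)

From HB Require Import structures.
From mathcomp Require Import all_boot all_order all_algebra.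
From mathcomp Require Import all_classical all_reals all_analysis measurable_realfun.
Set Implicit Arguments. Unset Strict Implicit. Unset Printing Implicit Defensive.
Import Order.TTheory GRing.Theory Num.Theory.
Import numFieldNormedType.Exports.
Local Open Scope classical_set_scope.
Local Open Scope ring_scope.

Section Defs.
Context {R : realType}.

(** The torus T = R/(2 pi Z) is represented by the fundamental domain [0, 2pi):
    [tmod x] is the representative of the class of x. *)
Definition tmod (x : R) : R := x - pi *+ 2 * (Num.floor (x / (pi *+ 2)))%:~R.

(** P(T x R): probability measures on R x R carried by [0,2pi) x R. *)
Definition torus_prob (m : probability (R * R)%type R) : Prop :=
  m [set p : R * R | 0 <= p.1 < pi *+ 2] = 1%E.

Definition Rrot (theta tau : R) (p : R * R) : R * R := (tmod (p.1 + theta), p.2 + tau).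
Definition ttr (tau : R) (w : R) : R := w + tau.

Definition finite_first_moment (g : probability R R) : Prop :=
  (\int[g]_w (`|w|)%:E < +oo)%E.

Definition cKur (x : R) (m : probability (R * R)%type R) : R :=
  \int[m]_p (2 * (sin ((x - p.1) / 2)) ^+ 2).

Context {d : measure_display} {Omega : measurableType d}.

Definition filtration (F : R -> set (set Omega)) : Prop :=
  (forall t, sigma_algebra setT (F t)) /\
  (forall t, F t `<=` measurable) /\
  (forall s t, s <= t -> F s `<=` F t).

Definition brownian_motion (P : probability Omega R) (F : R -> set (set Omega))
    (B : R -> Omega -> R) : Prop :=
  (forall o, B 0 o = 0) /\
  (forall o, {within [set t | 0 <= t], continuous (fun t => B t o)}) /\
  (forall t C, 0 <= t -> measurable C -> F t (B t @^-1` C)) /\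
  (forall s t, 0 <= s < t -> forall C, measurable C ->
     P [set o | B t o - B s o \in C] = normal_prob 0 (Num.sqrt (t - s)) C) /\
  (forall s t, 0 <= s < t -> forall G C, F s G -> measurable C ->
     P (G `&` [set o | (B t o - B s o)%R \in C]) =
     (P G * P [set o | (B t o - B s o)%R \in C])%E).

Definition prog_measurable (F : R -> set (set Omega)) (a : R -> Omega -> R) : Prop :=
  forall t, 0 <= t -> forall C : set R, measurable C ->
    <<s [set A `*` G | A in [set A : set R | measurable A /\ A `<=` `[0%R, t]%classic]
                     & G in F t] >>
      [set p : R * Omega | 0 <= p.1 <= t /\ a p.1 p.2 \in C].

Definition admissible (P : probability Omega R) (F : R -> set (set Omega))
    (a : R -> Omega -> R) : Prop :=
  prog_measurable F a /\
  forall T, 0 <= T ->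
    (\int[P]_o \int[lebesgue_measure]_(s in `[0%R, T]%classic) ((a s o) ^+ 2)%:E < +oo)%E.

Definition state (sigma : R) (B : R -> Omega -> R) (X0 : Omega -> R) (w : R)
    (a : R -> Omega -> R) (t : R) (o : Omega) : R :=
  X0 o + Rintegral lebesgue_measure `[0%R, t]%classic (fun s => a s o) + w * t + sigma * B t o.

Definition cost (P : probability Omega R) (beta kappa sigma : R) (B : R -> Omega -> R)
    (mu : R -> probability (R * R)%type R) (X0 : Omega -> R) (w : R)
    (a : R -> Omega -> R) : \bar R :=
  (\int[P]_o \int[lebesgue_measure]_(t in [set t : R | (0 <= t)%R])
     ((expR (- (beta * t)) *
        (2^-1 * (a t o) ^+ 2 + kappa * cKur (state sigma B X0 w a t o) (mu t)))%R)%:E)%E.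

Definition MFG_solution (P : probability Omega R) (F : R -> set (set Omega))
    (B : R -> Omega -> R) (beta kappa sigma : R)
    (g : probability R R) (mu : R -> probability (R * R)%type R) : Prop :=
  (forall t, 0 <= t -> torus_prob (mu t)) /\
  (forall t, 0 <= t -> forall C, measurable C -> mu t (snd @^-1` C) = g C) /\
  exists E : set R, measurable E /\ g E = 1%E /\
  exists nu : R -> R -> probability R R,
    (* disintegration mu_t(dx,dw) = mu_t^w(dx) g(dw) *)
    (forall t, 0 <= t -> forall A, measurable A ->
       measurable_fun [set: R] ((fun w : R => nu t w A) : R -> \bar R)) /\
    (forall t, 0 <= t -> forall A : set (R * R), measurable A ->
       mu t A = (\int[g]_w nu t w [set x | A (x, w)])%E) /\
    forall w, E w ->
      (forall t, 0 <= t -> nu t w [set x | 0 <= x < pi *+ 2] = 1%E) /\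
      exists X0 : Omega -> R,
        (forall C, measurable C -> F 0 (X0 @^-1` C)) /\
        (forall C, measurable C -> P [set o | tmod (X0 o) \in C] = nu 0 w C) /\
        exists astar : R -> Omega -> R,
          admissible P F astar /\
          ereal_inf [set cost P beta kappa sigma B mu X0 w a | a in admissible P F]
            = cost P beta kappa sigma B mu X0 w astar /\
          forall t, 0 <= t -> forall C, measurable C ->
            P [set o | tmod (state sigma B X0 w astar t o) \in C] = nu t w C.

End Defs.

From HB Require Import structures.
From mathcomp Require Import all_boot all_order all_algebra.
From mathcomp Require Import all_classical all_reals all_analysis measurable_realfun.
From mathcomp Require Import ring.
Import Order.TTheory GRing.Theory Num.Theory.
Import numFieldNormedType.Exports.
Local Open Scope classical_set_scope.
Local Open Scope ring_scope.

(* The problem is invariant under the Galilean change of frame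
   (x, w) |-> (x + theta + tau t, w + tau).  The coupling cost depends on x - y
   only through the 2pi-periodic kernel 2 sin^2((x - y)/2), so
   c(x + theta + tau t, ~mu_t) = c(x, mu_t).  A control driving the frequency-w
   state X_t from X_0 drives the frequency-(w + tau) state from X_0 + theta along
   X_t + theta + tau t; hence the two cost functionals agree on every control,
   optimal controls coincide, and the optimal laws are the rotated ones.  The
   disintegration of ~mu_t against ~g is that of mu_t transported along t_tau. *)

Lemma periodicz (U V : zmodType) (f : U -> V) (T : U) :
  periodic f T -> forall (k : int) (a : U), f (a + T *~ k) = f a.
Proof.
move=> fT [] n a; first exact: periodicn.
by rewrite -[in RHS](subrK (T *+ n.+1) a) (periodicn fT).
Qed.

Section torus.
Context {R : realType}.

Lemma pi2_gt0 : 0 < pi *+ 2 :> R.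
Proof. by rewrite mulrn_wgt0 // pi_gt0. Qed.

Lemma tmodE (x : R) : tmod x = x + pi *+ 2 *~ - Num.floor (x / (pi *+ 2)).
Proof. by rewrite /tmod mulrNz mulrzr. Qed.

Lemma tmod_itv (x : R) : 0 <= tmod x < pi *+ 2.
Proof.
have /andP[flx_le ltx_fl] := floor_itv (x / (pi *+ 2)).
rewrite ler_pdivlMr ?pi2_gt0 // in flx_le.
rewrite ltr_pdivrMr ?pi2_gt0 // intrD mulrDl mul1r in ltx_fl.
rewrite /tmod subr_ge0 ltrBlDl.
by rewrite ![pi *+ 2 * _]mulrC flx_le ltx_fl.
Qed.

Lemma tmodDz (x : R) (k : int) : tmod (x + pi *+ 2 *~ k) = tmod x.
Proof.
have pi2_neq0 : pi *+ 2 != 0 :> R by rewrite gt_eqF ?pi2_gt0.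
rewrite /tmod; have -> : (x + pi *+ 2 *~ k) / (pi *+ 2) = x / (pi *+ 2) + k%:~R.
  by rewrite -mulrzr mulrDl [pi *+ 2 * _]mulrC mulfK.
by rewrite floorDrz ?intr_int // intrKfloor intrD -mulrzr; ring.
Qed.

Lemma tmodDl (x c : R) : tmod (tmod x + c) = tmod (x + c).
Proof. by rewrite [tmod x]tmodE addrAC tmodDz. Qed.

Lemma measurable_tmod : measurable_fun setT (@tmod R).
Proof.
apply: measurable_funB => //; apply: nondecreasing_measurable => // x y xy.
by rewrite ler_pM2l ?pi2_gt0 // ler_int le_floor // ler_pM2r // invr_gt0 pi2_gt0.
Qed.

HB.instance Definition _ := isMeasurableFun.Build _ _ _ _ (@tmod R) measurable_tmod.

Lemma measurable_ttr (tau : R) : measurable_fun setT (ttr tau).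
Proof. exact: measurable_funD. Qed.

HB.instance Definition _ (tau : R) :=
  isMeasurableFun.Build _ _ _ _ (ttr tau) (measurable_ttr tau).

Definition tshift (c : R) (x : R) : R := tmod (x + c).

Lemma measurable_tshift (c : R) : measurable_fun setT (tshift c).
Proof. exact: measurableT_comp (measurable_ttr c). Qed.

HB.instance Definition _ (c : R) :=
  isMeasurableFun.Build _ _ _ _ (tshift c) (measurable_tshift c).

Lemma measurable_Rrot (c tau : R) : measurable_fun setT (Rrot c tau).
Proof.
apply/measurable_fun_pairP; split.
  exact: measurableT_comp (measurable_tshift c) measurable_fst.
exact: measurableT_comp (measurable_ttr tau) measurable_snd.
Qed.

HB.instance Definition _ (c tau : R) :=
  isMeasurableFun.Build _ _ _ _ (Rrot c tau) (measurable_Rrot c tau).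

Lemma measurable_torus_strip : measurable [set p : R * R | 0 <= p.1 < pi *+ 2].
Proof.
rewrite (_ : [set p | _] = fst @^-1` `[0, pi *+ 2[%classic).
  by rewrite -[X in measurable X]setTI; exact: measurable_fst.
by apply/funext => p /=; rewrite in_itv.
Qed.

End torus.

Section image_integral.
Context {R : realType} {d d' : measure_display}
  {X : measurableType d} {Y : measurableType d'}.

Lemma ge0_integral_image (m : {measure set X -> \bar R})
    (m' : {measure set Y -> \bar R}) (f : {mfun X >-> Y}) (h : Y -> \bar R) :
  (forall A, measurable A -> m' A = m (f @^-1` A)) ->
  measurable_fun setT h -> (forall y, (0 <= h y)%E) ->
  (\int[m']_y h y = \int[m]_x h (f x))%E.
Proof.
move=> m'E mh h0.
rewrite (eq_measure_integral (pushforward m f)); last by move=> A mA _; exact: m'E.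
by rewrite ge0_integral_pushforward // preimage_setT.
Qed.

End image_integral.

Section measurable_family_xsection.
Context {R : realType} {d d' : measure_display}
  {X : measurableType d} {Y : measurableType d'}.
Variable nu : X -> probability Y R.
Hypothesis measurable_nu : forall B, measurable B -> measurable_fun setT (nu ^~ B).

(* Packaging [nu] as a kernel gives access to the library's monotone-class
   argument on sections of product-measurable sets. *)
Definition prob_kernel : X -> {measure set Y -> \bar R} := fun x => nu x.

HB.instance Definition _ := isKernel.Build _ _ _ _ _ prob_kernel measurable_nu.

Let prob_kernel_setT x : prob_kernel x [set: Y] = 1%E.
Proof. exact: probability_setT. Qed.

HB.instance Definition _ :=
  Kernel_isProbability.Build _ _ _ _ _ prob_kernel prob_kernel_setT.

Lemma measurable_fun_prob_xsection (A : set (X * Y)) : measurable A ->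
  measurable_fun setT (fun x => nu x [set y | A (x, y)]).
Proof.
move=> mA; have := measurable_fun_xsection_finite_kernel prob_kernel (mem_set mA).
by under eq_fun do rewrite xsectionE.
Qed.

End measurable_family_xsection.

Section rotated_measures.
Context {R : realType}.

Lemma sin_sqr_periodic : periodic (fun a : R => sin a ^+ 2) pi.
Proof. by move=> a; rewrite /= sinDpi sqrrN. Qed.

Lemma measurable_cKur_integrand (x : R) :
  measurable_fun setT (fun p : R * R => 2 * sin ((x - p.1) / 2) ^+ 2).
Proof.
apply: measurable_funM => //; apply: measurable_funX.
apply: measurableT_comp (continuous_measurable_fun (@continuous_sin R)) _.
apply: measurable_funM => //; exact: measurable_funB.
Qed.

Lemma cKur_Rrot {m m' : probability (R * R)%type R} {c tau : R} :
  (forall A, measurable A -> m' A = m (Rrot c tau @^-1` A)) ->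
  forall x, cKur (x + c) m' = cKur x m.
Proof.
move=> m'E x; rewrite /cKur /Rintegral (ge0_integral_image _ _ _ _ m'E); first last.
- by move=> p; rewrite lee_fin mulr_ge0 // sqr_ge0.
- by apply/measurable_EFinP; exact: measurable_cKur_integrand.
congr (fine (integral _ _ _)); apply/funext => p /=; congr (2 * _)%:E.
rewrite /tmod (_ : _ / 2 = (x - p.1) / 2 + pi *~ Num.floor ((p.1 + c) / (pi *+ 2))).
  exact: (@periodicz _ _ (fun a => sin a ^+ 2) _ sin_sqr_periodic).
by move: (Num.floor _) => k; rewrite -[pi *~ _]mulrzr; field.
Qed.

Lemma torus_prob_Rrot {m m' : probability (R * R)%type R} {c tau : R} :
  (forall A, measurable A -> m' A = m (Rrot c tau @^-1` A)) -> torus_prob m'.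
Proof.
move=> m'E; rewrite /torus_prob m'E; last exact: measurable_torus_strip.
rewrite (_ : _ @^-1` _ = setT) ?probability_setT //.
by apply/seteqP; split => p // _; exact: tmod_itv.
Qed.

Lemma marginal_Rrot {m m' : probability (R * R)%type R} {h h' : probability R R}
    {c tau : R} :
  (forall A, measurable A -> m' A = m (Rrot c tau @^-1` A)) ->
  (forall C, measurable C -> h' C = h (ttr tau @^-1` C)) ->
  (forall C, measurable C -> m (snd @^-1` C) = h C) ->
  forall C, measurable C -> m' (snd @^-1` C) = h' C.
Proof.
move=> m'E h'E m_marg C mC; rewrite h'E // -m_marg; last exact: measurable_funPTI.
by rewrite m'E // -[X in measurable X]setTI; exact: measurable_snd.
Qed.

Lemma image_ttr_shifted_set {h h' : probability R R} {tau : R} :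
  (forall C, measurable C -> h' C = h (ttr tau @^-1` C)) ->
  forall E, measurable E -> h' [set w | E (w - tau)] = h E.
Proof.
move=> h'E E mE; rewrite h'E; last exact: (measurable_funPTI (ttr (- tau)) mE).
by congr (h _); apply/funext => w; rewrite /preimage /= /ttr addrK.
Qed.

Definition rotate_law (c tau : R) (k : R -> probability R R) (w : R) :
    probability R R :=
  distribution (k (w - tau)) (tshift c).

Lemma distribution_tshift_torus (m : probability R R) (c : R) :
  distribution m (tshift c) [set x | 0 <= x < pi *+ 2] = 1%E.
Proof.
rewrite /distribution /pushforward (_ : _ @^-1` _ = setT) ?probability_setT //.
by apply/seteqP; split => x // _; exact: tmod_itv.
Qed.

Lemma measurable_rotate_law {c tau : R} {k : R -> probability R R} :
  (forall A, measurable A -> measurable_fun setT (k ^~ A)) ->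
  forall A, measurable A -> measurable_fun setT (rotate_law c tau k ^~ A).
Proof.
move=> mk A mA.
exact: measurableT_comp (mk _ (measurable_funPTI _ mA)) (measurable_ttr (- tau)).
Qed.

Lemma rotate_law_disintegration {m m' : probability (R * R)%type R}
    {h h' : probability R R} {c tau : R} {k : R -> probability R R} :
  (forall A, measurable A -> m' A = m (Rrot c tau @^-1` A)) ->
  (forall C, measurable C -> h' C = h (ttr tau @^-1` C)) ->
  (forall A, measurable A -> measurable_fun setT (k ^~ A)) ->
  (forall A, measurable A -> m A = \int[h]_w k w [set x | A (x, w)])%E ->
  forall A, measurable A ->
    (m' A = \int[h']_w rotate_law c tau k w [set x | A (x, w)])%E.
Proof.
move=> m'E h'E mk mE A mA; rewrite m'E // mE //; last exact: measurable_funPTI.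
pose A' := (fun p : R * R => (tshift c p.2, p.1)) @^-1` A.
have mA' : measurable A'.
  have mswap : measurable_fun setT (fun p : R * R => (tshift c p.2, p.1)).
    apply/measurable_fun_pairP; split; last exact: measurable_fst.
    exact: measurableT_comp (measurable_tshift c) measurable_snd.
  by rewrite -[X in measurable X]setTI; exact: mswap.
rewrite (ge0_integral_image _ _ (ttr tau)
  (fun w => k (w - tau) [set x | A' (w, x)]) h'E).
- by apply: eq_integral => w _; rewrite /ttr addrK.
- apply: (measurable_fun_prob_xsection (fun w : R => k (w - tau))) => // B mB.
  exact: measurableT_comp (mk _ mB) (measurable_ttr (- tau)).
- by move=> w; exact: measure_ge0.
Qed.

End rotated_measures.

Definition optimal_flow {R : realType} {d : measure_display} {Omega : measurableType d}
    (P : probability Omega R) (F : R -> set (set Omega)) (B : R -> Omega -> R)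
    (beta kappa sigma : R) (mu : R -> probability (R * R)%type R)
    (nuw : R -> probability R R) (w : R) : Prop :=
  (forall t, 0 <= t -> nuw t [set x | 0 <= x < pi *+ 2] = 1%E) /\
  exists X0 : Omega -> R,
    (forall C, measurable C -> F 0 (X0 @^-1` C)) /\
    (forall C, measurable C -> P [set o | tmod (X0 o) \in C] = nuw 0 C) /\
    exists astar : R -> Omega -> R,
      admissible P F astar /\
      ereal_inf [set cost P beta kappa sigma B mu X0 w a | a in admissible P F]
        = cost P beta kappa sigma B mu X0 w astar /\
      forall t, 0 <= t -> forall C, measurable C ->
        P [set o | tmod (state sigma B X0 w astar t o) \in C] = nuw t C.

Section optimal_flow_rotation.
Context {R : realType} {d : measure_display} {Omega : measurableType d}.
Context {P : probability Omega R} {F : R -> set (set Omega)} {B : R -> Omega -> R}.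
Context {beta kappa sigma theta tau : R} {mu mut : R -> probability (R * R)%type R}.

Lemma state_rotate (X0 : Omega -> R) (w : R) (a : R -> Omega -> R) (t : R) (o : Omega) :
  state sigma B (fun o => X0 o + theta) w a t o =
  state sigma B X0 (w - tau) a t o + (theta + tau * t).
Proof. by rewrite /state; ring. Qed.

Lemma cost_rotate (X0 : Omega -> R) (w : R) :
  (forall t, 0 <= t -> forall A, measurable A ->
    mut t A = mu t (Rrot (theta + tau * t) tau @^-1` A)) ->
  cost P beta kappa sigma B mut (fun o => X0 o + theta) w =
  cost P beta kappa sigma B mu X0 (w - tau).
Proof.
move=> mutE; apply/funext => a; congr (integral _ _ _); apply/funext => o.
apply: eq_integral => t; rewrite inE => /= t0.
by rewrite state_rotate (cKur_Rrot (mutE _ t0)).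
Qed.

Lemma law_tmodD {X : Omega -> R} {m : probability R R} :
  (forall C, measurable C -> P [set o | tmod (X o) \in C] = m C) ->
  forall c C, measurable C ->
    P [set o | tmod (X o + c) \in C] = distribution m (tshift c) C.
Proof.
move=> lawX c C mC.
rewrite /distribution /pushforward -lawX; last exact: measurable_funPTI.
by congr (P _); apply/funext => o; rewrite /preimage /= !inE /tshift /= tmodDl.
Qed.

Lemma optimal_flow_rotate {nuw : R -> probability R R} {w : R} :
  (forall t, 0 <= t -> forall A, measurable A ->
    mut t A = mu t (Rrot (theta + tau * t) tau @^-1` A)) ->
  optimal_flow P F B beta kappa sigma mu nuw (w - tau) ->
  optimal_flow P F B beta kappa sigma mut
    (fun t => distribution (nuw t) (tshift (theta + tau * t))) w.
Proof.
move=> mutE [_ [X0 [X0_adapted [X0_law [astar [astar_adm [astar_opt astar_law]]]]]]].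
split=> [t _|]; first exact: distribution_tshift_torus.
exists (fun o => X0 o + theta); split.
  by move=> C mC; exact: X0_adapted (ttr theta @^-1` C) (measurable_funPTI _ mC).
split.
  by move=> C mC; have := law_tmodD X0_law theta C mC; rewrite mulr0 addr0.
exists astar; split; first exact: astar_adm.
rewrite (cost_rotate _ _ mutE); split; first exact: astar_opt.
move=> t t0 C mC; under eq_fun do rewrite state_rotate.
exact: law_tmodD (astar_law t t0) _ C mC.
Qed.

End optimal_flow_rotation.

Theorem lemma2p2 (R : realType) (d : measure_display) (Omega : measurableType d)
  (P : probability Omega R) (F : R -> set (set Omega)) (B : R -> Omega -> R)
  (beta kappa sigma : R)
  (g : probability R R) (mu : R -> probability (R * R)%type R)
  (theta tau : R)
  (gt : probability R R) (mut : R -> probability (R * R)%type R) :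
  filtration F -> brownian_motion P F B ->
  0 <= kappa -> 0 < beta -> 0 < sigma ->
  finite_first_moment g ->
  MFG_solution P F B beta kappa sigma g mu ->
  (forall C : set R, measurable C -> gt C = g (ttr tau @^-1` C)) ->
  (forall t, 0 <= t -> forall A : set (R * R), measurable A ->
     mut t A = mu t (Rrot (theta + tau * t) tau @^-1` A)) ->
  MFG_solution P F B beta kappa sigma gt mut.
Proof.
move=> _ _ _ _ _ _ [_ [mu_marg [E [mE [gE [nu [nu_meas [muE nu_opt]]]]]]]] gtE mutE.
split=> [t t0|]; first exact: torus_prob_Rrot (mutE t t0).
split=> [t t0|]; first exact: marginal_Rrot (mutE t t0) gtE (mu_marg t t0).
exists [set w | E (w - tau)]; split; first exact: (measurable_funPTI (ttr (- tau)) mE).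
split; first by rewrite (image_ttr_shifted_set gtE _ mE).
exists (fun t => rotate_law (theta + tau * t) tau (nu t)); split.
  by move=> t t0; exact: measurable_rotate_law (nu_meas t t0).
split=> [t t0|w Ew].
  exact: rotate_law_disintegration (mutE t t0) gtE (nu_meas t t0) (muE t t0).
exact: optimal_flow_rotate mutE (nu_opt _ Ew).
Qed.
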